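(* There is a constant $C$ such that for every sufficiently large $n$ there exists a $2$-planar graph of girth $5$ on $n$ vertices with at least $\left(2+\frac{2}{7}\right)n-C$ edges.
   Context: All graphs are finite and simple. A graph is $k$-planar if it admits a drawing in the plane in which every edge is crossed at most $k$ times. The girth of a graph is the length of its shortest cycle. (The paper states the edge count as $(2+\frac27)n-O(1)$.) *)

From Stdlib Require Import Reals.
From mathcomp Require Import all_boot.

Set Implicit Arguments.
Unset Strict Implicit.
Unset Printing Implicit Defensive.

Definition plane := (R * R)%type.

Definition simple_graph n (e : rel 'I_n) : Prop := symmetric e /\ irreflexive e.

Definition edges n (e : rel 'I_n) : {set 'I_n * 'I_n} :=
  [set p : 'I_n * 'I_n | (p.1 < p.2)%N && e p.1 p.2].

Definition has_cycle_of_length n (e : rel 'I_n) (k : nat) : Prop :=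
  (3 <= k)%N /\
  exists f : nat -> 'I_n,
    (forall i j, (i < k)%N -> (j < k)%N -> f i = f j -> i = j) /\
    (forall i, (i < k)%N -> e (f i) (f ((i.+1) %% k))).

Definition girth_is n (e : rel 'I_n) (g : nat) : Prop :=
  has_cycle_of_length e g /\ forall l, (l < g)%N -> ~ has_cycle_of_length e l.

(* A Jordan arc from a to b: a continuous map R -> plane, injective on [0,1],
   with g 0 = a and g 1 = b (only its restriction to [0,1] matters). *)
Definition is_arc (g : R -> plane) (a b : plane) : Prop :=
  continuity (fun t => fst (g t)) /\ continuity (fun t => snd (g t)) /\
  (forall s t : R, Rle 0 s /\ Rle s 1 -> Rle 0 t /\ Rle t 1 -> g s = g t -> s = t) /\
  g R0 = a /\ g R1 = b.

Definition crossing n (e : rel 'I_n) (gam : 'I_n * 'I_n -> R -> plane)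
    (p q : 'I_n * 'I_n) (z : plane) : Prop :=
  q \in edges e /\ q <> p /\
  exists s t : R, Rlt 0 s /\ Rlt s 1 /\ Rlt 0 t /\ Rlt t 1 /\ gam p s = z /\ gam q t = z.

Definition k_planar (k : nat) n (e : rel 'I_n) : Prop :=
  exists (pos : 'I_n -> plane) (gam : 'I_n * 'I_n -> R -> plane),
    injective pos /\
    (forall p, p \in edges e ->
       is_arc (gam p) (pos p.1) (pos p.2) /\
       (forall (t : R) w, Rlt 0 t /\ Rlt t 1 -> gam p t <> pos w)) /\
    (forall p, p \in edges e ->
       exists L : seq (('I_n * 'I_n) * plane),
         (size L <= k)%N /\
         (forall q z, crossing e gam p q z -> List.In (q, z) L)).

From Stdlib Require Import Reals ZArith Lia Lra.
From mathcomp Require Import all_boot zify ssrZ.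

(* Vertex u is placed at the lattice point (u / 13, u mod 13) of the strip
   Z x [0, 13), and edges are straight segments following a pattern that is
   periodic under the translation (7, 0); each period of 91 vertices carries
   208 = (2 + 2/7) * 91 edges.  Absence of 3- and 4-cycles and the bound of two
   crossings per edge are local and translation invariant, so both reduce to
   a finite computation over one period, in which crossings of lattice
   segments are detected by exact integer arithmetic.  A 5-cycle is exhibited
   explicitly. *)

Set Implicit Arguments.
Unset Strict Implicit.
Unset Printing Implicit Defensive.

Section LatticePattern.
Local Open Scope Z_scope.
Implicit Types (a b c d A C U V W : Z * Z).

Definition addZ2 (c d : Z * Z) := (c.1 + d.1, c.2 + d.2).
Definition subZ2 (c d : Z * Z) := (c.1 - d.1, c.2 - d.2).
Definition oppZ2 (d : Z * Z) := (- d.1, - d.2).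
Definition crossZ (a b : Z * Z) := a.1 * b.2 - a.2 * b.1.
Definition dotZ (a b : Z * Z) := a.1 * b.1 + a.2 * b.2.
Definition shift7 (k : Z) (c : Z * Z) := (c.1 - 7 * k, c.2).

Lemma addZ2_subZ2 c c' : addZ2 c (subZ2 c' c) = c'.
Proof. by case: c c' => [x y] [x' y']; rewrite /addZ2 /subZ2; f_equal; cbn [fst snd]; lia. Qed.

Lemma shift7_inj k : injective (shift7 k).
Proof. by rewrite /shift7 => -[x y] [x' y'] [] ? ->; f_equal; lia. Qed.

Lemma shift7K k : cancel (shift7 k) (shift7 (- k)).
Proof. by move=> [x y]; rewrite /shift7; f_equal; cbn [fst snd]; lia. Qed.

Lemma subZ2_shift7 k c c' : subZ2 (shift7 k c) (shift7 k c') = subZ2 c c'.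
Proof. by rewrite /subZ2 /shift7; f_equal; cbn [fst snd]; lia. Qed.

Lemma addZ2_shift7 k c d : addZ2 (shift7 k c) d = shift7 k (addZ2 c d).
Proof. by rewrite /addZ2 /shift7; f_equal; cbn [fst snd]; lia. Qed.

Definition zrange (a : Z) (k : nat) : seq Z := [seq a + Z.of_nat i | i <- iota 0 k].

Lemma mem_zrange (a : Z) k x : a <= x < a + Z.of_nat k -> x \in zrange a k.
Proof.
move=> Hx; apply/mapP; exists (Z.to_nat (x - a)); last by lia.
by rewrite mem_iota; apply/andP; split; lia.
Qed.

Definition in_strip (y : Z) := (0 <=? y) && (y <? 13).

Lemma in_stripP y : reflect (0 <= y < 13) (in_strip y).
Proof. by apply: (iffP andP) => -[/Z.leb_spec0 ? /Z.ltb_spec0 ?]; split. Qed.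

(* The pattern depends only on (x - 2 y) mod 7, hence is invariant under the
   translations (7, 0) and (2, 1). *)
Definition cell_class (c : Z * Z) := (c.1 - 2 * c.2) mod 7.

Definition tile_edges : seq (Z * (Z * Z)) :=
  [:: (0, (1, 1)); (0, (2, -1)); (0, (2, 1)); (1, (1, 1)); (1, (2, -1));
      (2, (1, 0)); (2, (1, 1)); (2, (2, -1)); (2, (2, 1)); (3, (1, 0));
      (3, (2, -1)); (4, (1, 0)); (4, (1, 1)); (5, (1, -1)); (5, (1, 0));
      (5, (2, 1)); (6, (1, -1))].

Definition edge_steps : seq (Z * Z) :=
  [:: (0, 1); (1, -2); (1, -1); (1, 0); (1, 1); (1, 2); (2, -1); (2, 1)].

Definition pattern_step (c d : Z * Z) := (cell_class c, d) \in tile_edges.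

Definition strip_adj (c c' : Z * Z) :=
  [&& in_strip c.2, in_strip c'.2 &
      pattern_step c (subZ2 c' c) || pattern_step c' (subZ2 c c')].

Lemma pattern_step_steps c d : pattern_step c d -> d \in edge_steps.
Proof. by move=> /(map_f snd); move: d; apply/allP; vm_compute. Qed.

Lemma edge_step_bounds d : d \in edge_steps ->
  [/\ 0 <= d.1 <= 2, -2 <= d.2 <= 2, 0 < 13 * d.1 + d.2
    & d.1 = 1 \/ d.2 = 1 \/ d.2 = -1].
Proof.
rewrite !inE => Hd.
by repeat case/orP: Hd => [/eqP -> /= | Hd]; try (move/eqP: Hd => -> /=); split; lia.
Qed.

Lemma strip_adjC c c' : strip_adj c c' = strip_adj c' c.
Proof. by rewrite /strip_adj; do 2 case: in_strip => //=; rewrite orbC. Qed.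

Lemma strip_adj_irr c : strip_adj c c = false.
Proof.
apply/negbTE; rewrite /strip_adj /subZ2 !Z.sub_diag orbb.
by apply/and3P => -[_ _ /pattern_step_steps].
Qed.

Lemma strip_adj_rows c c' : strip_adj c c' -> 0 <= c.2 < 13 /\ 0 <= c'.2 < 13.
Proof. by case/and3P => /in_stripP ? /in_stripP ?. Qed.

Lemma strip_adj_shift7 k c c' :
  strip_adj (shift7 k c) (shift7 k c') = strip_adj c c'.
Proof.
have class_shift7 x : cell_class (shift7 k x) = cell_class x.
  rewrite /cell_class /shift7; cbn [fst snd].
  have -> : x.1 - 7 * k - 2 * x.2 = x.1 - 2 * x.2 + (- k) * 7 by lia.
  exact: Z_mod_plus_full.
by rewrite /strip_adj /pattern_step !subZ2_shift7 !class_shift7.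
Qed.

Lemma strip_adj_step c c' : strip_adj c c' ->
  subZ2 c' c \in edge_steps \/ subZ2 c c' \in edge_steps.
Proof. by case/and3P => _ _ /orP [] /pattern_step_steps; [left | right]. Qed.

Definition neighbours (c : Z * Z) : seq (Z * Z) :=
  [seq c' <- [seq addZ2 c d | d <- edge_steps ++ map oppZ2 edge_steps] | strip_adj c c'].

Lemma strip_adj_neighbours c c' : strip_adj c c' -> c' \in neighbours c.
Proof.
move=> adj; rewrite mem_filter adj -(addZ2_subZ2 c c') map_f // mem_cat.
case: (strip_adj_step adj) => [-> // | Hd]; apply/orP; right.
suff -> : subZ2 c' c = oppZ2 (subZ2 c c') by rewrite map_f.
by rewrite /oppZ2 /subZ2; f_equal; cbn [fst snd]; lia.
Qed.

Definition window : seq (Z * Z) := [seq (x, y) | x <- zrange 0 7, y <- zrange 0 13].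

Lemma shift7_window c : 0 <= c.2 < 13 -> shift7 (c.1 / 7) c \in window.
Proof.
case: c => x y /= Hy.
have Hx : 0 <= x - 7 * (x / 7) < 7.
  by have := Z.mod_pos_bound x 7; rewrite Z.mod_eq //; lia.
by apply/allpairsP; exists (x - 7 * (x / 7), y); split; rewrite ?mem_zrange //; lia.
Qed.

Definition no_short_cycle_at (a : Z * Z) :=
  all (fun b => all (fun c => ~~ strip_adj c a &&
         all (fun d => strip_adj d a ==> (a == c) || (b == d)) (neighbours c))
       (neighbours b)) (neighbours a).

Lemma no_short_cycle_window : all no_short_cycle_at window.
Proof. by vm_compute. Qed.

Lemma strip_short_cycle a b c : strip_adj a b -> strip_adj b c ->
  ~~ strip_adj c a /\
  forall d, strip_adj c d -> strip_adj d a -> a = c \/ b = d.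
Proof.
move=> ab bc; set s := shift7 (a.1 / 7).
have nb x y : strip_adj x y -> s y \in neighbours (s x).
  by move=> xy; apply: strip_adj_neighbours; rewrite strip_adj_shift7.
have /allP/(_ _ (shift7_window (strip_adj_rows ab).1)) := no_short_cycle_window.
move=> /allP/(_ _ (nb _ _ ab)) /allP/(_ _ (nb _ _ bc)).
rewrite strip_adj_shift7 => /andP [-> /allP cycle4]; split=> // d cd da.
move: (cycle4 _ (nb _ _ cd)); rewrite strip_adj_shift7 da.
by case/orP => /eqP /shift7_inj; [left | right].
Qed.

(* An exact integer test that holds whenever the open segments ]0, U[ and
   ]W, W + V[ share a point: by Cramer's rule when U and V are not parallel,
   and by overlapping projections on U when the segments are collinear. *)
Definition segments_may_meet (W U V : Z * Z) : bool :=
  let D := crossZ U V in let X := crossZ W V in let Y := crossZ W U in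
  if D == 0 then
    let a := dotZ W U in let b := a + dotZ V U in
    [&& X == 0, Y == 0, 0 <? Z.max a b & Z.min a b <? dotZ U U]
  else [&& 0 <? X * D, X * D <? D * D, 0 <? Y * D & Y * D <? D * D].

Definition near (A : Z * Z) : seq (Z * Z) :=
  [seq (x, y) | x <- zrange (A.1 - 1) 3, y <- zrange (A.2 - 3) 7].

Lemma mem_near A C :
  -1 <= C.1 - A.1 <= 1 -> -3 <= C.2 - A.2 <= 3 -> C \in near A.
Proof.
case: C => x y /= *; apply/allpairsP; exists (x, y).
by split; rewrite ?mem_zrange //; cbn [fst snd]; lia.
Qed.

Definition local_candidates (A U : Z * Z) : seq ((Z * Z) * (Z * Z)) :=
  [seq CV <- [seq (C, V) | C <- near A, V <- edge_steps] |
    [&& segments_may_meet (subZ2 CV.1 A) U CV.2, CV != (A, U) &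
        strip_adj CV.1 (addZ2 CV.1 CV.2)]].

Definition few_crossings_at (A : Z * Z) :=
  all (fun U => strip_adj A (addZ2 A U) ==>
         let cs := local_candidates A U in
         (size cs <= 2)%N && all (fun CV => crossZ U CV.2 != 0) cs)
      edge_steps.

Lemma few_crossings_window : all few_crossings_at window.
Proof. by vm_compute. Qed.

(* [local_candidates] is certified only on the period window, so the search
   is done at the translate of A in the window and translated back. *)
Definition crossing_candidates (A U : Z * Z) :=
  [seq (shift7 (- (A.1 / 7)) CV.1, CV.2) | CV <- local_candidates (shift7 (A.1 / 7) A) U].

Lemma crossing_candidates_bound A U : strip_adj A (addZ2 A U) -> U \in edge_steps ->
  (size (crossing_candidates A U) <= 2)%N /\
  {in crossing_candidates A U, forall CV, crossZ U CV.2 <> 0}.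
Proof.
move=> AU HU; have /allP/(_ _ (shift7_window (strip_adj_rows AU).1)) := few_crossings_window.
move=> /allP/(_ _ HU); rewrite addZ2_shift7 strip_adj_shift7 AU => /andP [size2 /allP nonpar].
split; first by rewrite size_map.
by move=> _ /mapP [CV /nonpar /eqP ? ->].
Qed.

End LatticePattern.

Section Segments.
Local Open Scope R_scope.
Implicit Types (a b d w A C U V W : Z * Z) (s t : R).

Definition point (c : Z * Z) : plane := (IZR c.1, IZR c.2).

Definition segment (a b : Z * Z) (t : R) : plane :=
  (IZR a.1 + t * (IZR b.1 - IZR a.1), IZR a.2 + t * (IZR b.2 - IZR a.2)).

Definition meet_param (W U V : Z * Z) : R := IZR (crossZ W V) / IZR (crossZ U V).

Lemma continuity_affine (a c : R) : continuity (fun t => a + t * c).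
Proof.
apply: continuity_plus; first exact: continuity_const.
exact: continuity_mult (derivable_continuous _ derivable_id) (continuity_const _ _).
Qed.

Lemma segment_arc a b : a <> b -> is_arc (segment a b) (point a) (point b).
Proof.
move=> ab; have [Hx | Hy] : (b.1 - a.1 <> 0)%Z \/ (b.2 - a.2 <> 0)%Z.
  case: a b ab => [a1 a2] [b1 b2] ab /=; case: (Z.eq_dec b1 a1) => e1; last by left; lia.
  by right => e2; apply: ab; congr pair; lia.
all: do 2 (split; first exact: continuity_affine).
all: split; last by split; rewrite /segment /point; f_equal; ring.
all: move=> s t _ _ [Es Et]; rewrite -!minus_IZR in Es Et.
- by apply: (Rmult_eq_reg_r (IZR (b.1 - a.1))); [lra | apply: not_0_IZR].
- by apply: (Rmult_eq_reg_r (IZR (b.2 - a.2))); [lra | apply: not_0_IZR].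
Qed.

Lemma not_IZR_in_open_unit k : ~ (0 < IZR k < 1).
Proof. by move=> [/lt_0_IZR ? /lt_IZR ?]; lia. Qed.

Lemma segment_avoids_points a d w t : d \in edge_steps -> 0 < t < 1 ->
  segment a (addZ2 a d) t <> point w.
Proof.
case/edge_step_bounds=> _ _ _ unit_coord Ht [Ex Ey].
rewrite /addZ2 /= !plus_IZR in Ex Ey.
case: unit_coord => [| []] e; rewrite e in Ex Ey.
- by apply: (@not_IZR_in_open_unit (w.1 - a.1)); rewrite minus_IZR -Ex; lra.
- by apply: (@not_IZR_in_open_unit (w.2 - a.2)); rewrite minus_IZR -Ey; lra.
- by apply: (@not_IZR_in_open_unit (a.2 - w.2)); rewrite minus_IZR -Ey; lra.
Qed.

Lemma segments_may_meet_of_meet W U V s t :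
  0 < s < 1 -> 0 < t < 1 -> (0 < dotZ U U)%Z ->
  s * IZR U.1 - t * IZR V.1 = IZR W.1 -> s * IZR U.2 - t * IZR V.2 = IZR W.2 ->
  segments_may_meet W U V.
Proof.
case: W U V => [wx wy] [ux uy] [vx vy] /= Hs Ht HUU E1 E2.
rewrite /segments_may_meet /crossZ /dotZ /=.
have hX : s * IZR (ux * vy - uy * vx) = IZR (wx * vy - wy * vx).
  by rewrite !minus_IZR !mult_IZR -E1 -E2; ring.
have hY : t * IZR (ux * vy - uy * vx) = IZR (wx * uy - wy * ux).
  by rewrite !minus_IZR !mult_IZR -E1 -E2; ring.
have hP : s * IZR (ux * ux + uy * uy) = IZR (wx * ux + wy * uy) + t * IZR (vx * ux + vy * uy).
  by rewrite !plus_IZR !mult_IZR -E1 -E2; ring.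
move/IZR_lt: HUU; rewrite /dotZ /=; move: hX hY hP.
move: (ux * vy - uy * vx)%Z (wx * vy - wy * vx)%Z (wx * uy - wy * ux)%Z => D X Y.
move: (wx * ux + wy * uy)%Z (vx * ux + vy * uy)%Z (ux * ux + uy * uy)%Z => a c L hX hY hP HL.
case: eqP => [D0 | /eqP/negbTE D0].
  move: hX hY; rewrite D0 !Rmult_0_r => /esym/eq_IZR_R0 -> /esym/eq_IZR_R0 -> /=.
  apply/andP; split; apply/Z.ltb_lt.
  + apply/Z.max_lt_iff; have [c0 | c0] := Z.le_gt_cases 0 c; [right | left];
      apply: lt_IZR; rewrite ?plus_IZR; [move/IZR_le: c0 | move/IZR_lt: c0]; nra.
  + apply/Z.min_lt_iff; have [c0 | c0] := Z.le_gt_cases 0 c; [left | right];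
      apply: lt_IZR; rewrite ?plus_IZR; [move/IZR_le: c0 | move/IZR_lt: c0]; nra.
have DD : 0 < IZR D * IZR D.
  have : IZR D <> 0 by apply: not_0_IZR => D00; rewrite D00 eqxx in D0.
  by move=> ?; nra.
by apply/and4P; split; apply/Z.ltb_lt/lt_IZR; rewrite !mult_IZR -?hX -?hY; nra.
Qed.

Lemma meet_param_eq W U V s t : (crossZ U V <> 0)%Z ->
  s * IZR U.1 - t * IZR V.1 = IZR W.1 -> s * IZR U.2 - t * IZR V.2 = IZR W.2 ->
  s = meet_param W U V.
Proof.
move=> /not_0_IZR D0 E1 E2; rewrite /meet_param.
apply: (Rmult_eq_reg_r (IZR (crossZ U V))) => //; rewrite Rmult_assoc Rinv_l // Rmult_1_r.
by rewrite /crossZ !minus_IZR !mult_IZR -E1 -E2; ring.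
Qed.

Lemma mem_crossing_candidates A U C V s t :
  strip_adj A (addZ2 A U) -> U \in edge_steps -> strip_adj C (addZ2 C V) -> V \in edge_steps ->
  (C, V) != (A, U) -> 0 < s < 1 -> 0 < t < 1 ->
  segment A (addZ2 A U) s = segment C (addZ2 C V) t ->
  (C, V) \in crossing_candidates A U /\ s = meet_param (subZ2 C A) U V.
Proof.
move=> AU HU CV HV CV_AU Hs Ht [Ex Ey].
have E1 : s * IZR U.1 - t * IZR V.1 = IZR (subZ2 C A).1.
  by move: Ex; rewrite /subZ2 /addZ2; cbn [fst snd]; rewrite minus_IZR !plus_IZR; lra.
have E2 : s * IZR U.2 - t * IZR V.2 = IZR (subZ2 C A).2.
  by move: Ey; rewrite /subZ2 /addZ2; cbn [fst snd]; rewrite minus_IZR !plus_IZR; lra.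
have [[/IZR_le Ux1 /IZR_le Ux2] [/IZR_le Uy1 /IZR_le Uy2] _ Uunit] := edge_step_bounds HU.
have [[/IZR_le Vx1 /IZR_le Vx2] [/IZR_le Vy1 /IZR_le Vy2] _ _] := edge_step_bounds HV.
have C_near : (C.1 - A.1 < 2 /\ A.1 - C.1 < 2 /\ C.2 - A.2 < 4 /\ A.2 - C.2 < 4)%Z.
  rewrite /subZ2 /= minus_IZR in E1; rewrite /subZ2 /= minus_IZR in E2.
  by do ![split]; apply: lt_IZR; rewrite minus_IZR; nra.
have meet : segments_may_meet (subZ2 C A) U V.
  apply: segments_may_meet_of_meet Hs Ht _ E1 E2.
  by rewrite /dotZ; case: Uunit => [|[]] ->; nia.
have mem : (C, V) \in crossing_candidates A U.
  apply/mapP; exists (shift7 (A.1 / 7) C, V); last by rewrite /= shift7K.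
  rewrite mem_filter; apply/andP; split.
    apply/and3P; split; cbn [fst snd].
    - by rewrite subZ2_shift7.
    - by apply: contra CV_AU; rewrite xpair_eqE (inj_eq (@shift7_inj _)) -xpair_eqE.
    - by rewrite addZ2_shift7 strip_adj_shift7.
  apply/allpairsP; exists (shift7 (A.1 / 7) C, V); split=> //.
  by apply: mem_near; rewrite /shift7; cbn [fst snd]; lia.
split=> //; apply: meet_param_eq E1 E2.
exact: (crossing_candidates_bound AU HU).2 _ mem.
Qed.

End Segments.

Definition cell (u : nat) : Z * Z := (Z.of_nat (u %/ 13), Z.of_nat (u %% 13)).

Lemma cell_index u : (13 * (cell u).1 + (cell u).2)%Z = Z.of_nat u.
Proof. rewrite /cell; cbn [fst snd]; lia. Qed.

Lemma cell_inj : injective cell.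
Proof. by move=> u v E; apply: Nat2Z.inj; rewrite -(cell_index u) -(cell_index v) E. Qed.

Lemma cell_shift b o : cell (91 * b + o) = shift7 (- Z.of_nat b) (cell o).
Proof. rewrite /cell /shift7; cbn [fst snd]; f_equal; lia. Qed.

Definition strip_graph n : rel 'I_n := fun u v => strip_adj (cell u) (cell v).
Arguments strip_graph : clear implicits.

Lemma strip_graph_simple n : simple_graph (strip_graph n).
Proof. by split=> [u v | u]; [exact: strip_adjC | exact: strip_adj_irr]. Qed.

Lemma strip_graph_edge_step n (p : 'I_n * 'I_n) : p \in edges (strip_graph n) ->
  strip_adj (cell p.1) (cell p.2) /\ subZ2 (cell p.2) (cell p.1) \in edge_steps.
Proof.
rewrite inE => /andP [lt12 adj]; split=> //.
case: (strip_adj_step adj) => // /edge_step_bounds [_ _ + _].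
by rewrite /subZ2; cbn [fst snd]; have := cell_index p.1; have := cell_index p.2; lia.
Qed.

Lemma strip_graph_no_short_cycle n k : (k < 5)%N ->
  ~ has_cycle_of_length (strip_graph n) k.
Proof.
move=> k5 [k3 [f [f_inj adj]]].
have cell_f_inj i j : (i < k)%N -> (j < k)%N -> cell (f i) = cell (f j) -> i = j.
  by move=> ik jk /cell_inj/val_inj; apply: f_inj.
have [] : k = 3 \/ k = 4 by lia.
all: move=> k_eq; subst k.
- have [/negP no3 _] := strip_short_cycle (adj 0 isT) (adj 1 isT).
  exact: no3 (adj 2 isT).
- have [_ no4] := strip_short_cycle (adj 0 isT) (adj 1 isT).
  case: (no4 _ (adj 2 isT) (adj 3 isT)) => E.
  + by have := cell_f_inj 0 2 isT isT E.
  + by have := cell_f_inj 1 3 isT isT E.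
Qed.

Definition pentagon : seq nat := [:: 0; 14; 1; 13; 27].

Lemma strip_graph_pentagon n : (28 <= n)%N -> has_cycle_of_length (strip_graph n) 5.
Proof.
case: n => // n Hn; split=> //.
have small i : (i < 5)%N -> (nth 0 pentagon i < n.+1)%N.
  by move=> Hi; apply: leq_trans Hn; move: i Hi; do 5! case=> //.
exists (fun i => inord (nth 0 pentagon i)); split.
- move=> i j Hi Hj /(congr1 (@nat_of_ord _)); rewrite !inordK ?small //.
  by move/eqP; rewrite nth_uniq // => /eqP.
- move=> i Hi; rewrite /strip_graph /= !inordK ?small ?ltn_pmod //.
  by move: i Hi; do 5! case=> //.
Qed.

Lemma strip_graph_girth n : (28 <= n)%N -> girth_is (strip_graph n) 5.
Proof.
by move=> Hn; split=> [|l /strip_graph_no_short_cycle //]; apply: strip_graph_pentagon.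
Qed.

(* Edges whose smaller end is among the first 91 vertices (one period of 7
   columns); an edge spans at most two columns, so its larger end lies below
   91 + 2 * 13 = 117. *)
Definition block_edges : seq (nat * nat) :=
  [seq p <- [seq (u, v) | u <- iota 0 91, v <- iota 0 117] |
     (p.1 < p.2)%N && strip_adj (cell p.1) (cell p.2)].

Lemma size_block_edges : size block_edges = 208.
Proof. by vm_compute. Qed.

Lemma block_edges_uniq : uniq block_edges.
Proof.
apply/filter_uniq/allpairs_uniq; [exact: iota_uniq | exact: iota_uniq |].
by move=> -[? ?] [? ?].
Qed.

Lemma block_edge_bounds (p : nat * nat) : p \in block_edges ->
  [/\ (p.1 < 91)%N, (p.1 < p.2 < 117)%N & strip_adj (cell p.1) (cell p.2)].
Proof.
case: p => u v; rewrite mem_filter => /andP [/andP [lt12 adj]].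
case/allpairsP => -[u' v'] [+ + [eu ev]]; subst u' v'; rewrite !mem_iota => u91 v117.
by cbn [fst snd] in *; split=> //; lia.
Qed.

Lemma strip_graph_edges n : (208 * (n %/ 91 - 1) <= #|edges (strip_graph n)|)%N.
Proof.
case: n => [|n]; first by rewrite div0n.
set B := (n.+1 %/ 91 - 1)%N.
pose e (bp : nat * (nat * nat)) : 'I_n.+1 * 'I_n.+1 :=
  (inord (91 * bp.1 + bp.2.1), inord (91 * bp.1 + bp.2.2)).
pose s := [seq (b, p) | b <- iota 0 B, p <- block_edges].
have s_fits (b : nat) (p : nat * nat) : (b, p) \in s -> [/\ (91 * b + p.1 < 91 * b + p.2 < n.+1)%N,
    (p.1 < 91)%N & strip_adj (cell p.1) (cell p.2)].
  case/allpairsP => -[b' p'] [+ + [eb ep]]; subst b' p'.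
  rewrite mem_iota => Hb /block_edge_bounds [p1 p12 adj]; cbn [fst snd] in *; split=> //.
  by move: Hb; rewrite /B; lia.
have e_val (b : nat) (p : nat * nat) : (b, p) \in s ->
    nat_of_ord (e (b, p)).1 = (91 * b + p.1)%N /\ nat_of_ord (e (b, p)).2 = (91 * b + p.2)%N.
  by case/s_fits => fit _ _; rewrite /e; cbn [fst snd]; rewrite !inordK; lia.
have e_inj (x y : nat * (nat * nat)) : x \in s -> y \in s -> e x = e y -> x = y.
  case: x y => [b [u v]] [b' [u' v']] bp bp' E.
  have [e1 e2] := e_val _ _ bp; have [e1' e2'] := e_val _ _ bp'.
  have [_ u91 _] := s_fits _ _ bp; have [_ u91' _] := s_fits _ _ bp'.
  rewrite E in e1 e2; cbn [fst snd] in *.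
  have eb : b = b' by lia.
  by subst b'; congr (_, (_, _)); lia.
have e_edges bp : bp \in s -> e bp \in edges (strip_graph n.+1).
  case: bp => b p bp; have [fit _ adj] := s_fits _ _ bp; have [e1 e2] := e_val _ _ bp.
  rewrite inE; apply/andP; split; first by rewrite e1 e2; lia.
  by rewrite /strip_graph e1 e2 !cell_shift strip_adj_shift7.
have s_uniq : uniq s.
  by apply: allpairs_uniq; [exact: iota_uniq | exact: block_edges_uniq | move=> -[? ?] [? ?]].
have e_sub : {subset map e s <= enum (edges (strip_graph n.+1))}.
  by move=> _ /mapP [bp bp_s ->]; rewrite mem_enum; apply: e_edges.
have := uniq_leq_size _ e_sub; rewrite (map_inj_in_uniq e_inj) => /(_ s_uniq).
by rewrite size_map size_allpairs size_iota size_block_edges -cardE mulnC.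
Qed.

Section StripDrawing.
Local Open Scope R_scope.

Lemma point_inj : injective point.
Proof. by move=> [x y] [x' y'] [/eq_IZR -> /eq_IZR ->]. Qed.

Definition drawing n (p : 'I_n * 'I_n) : R -> plane := segment (cell p.1) (cell p.2).

Definition cell_vertex n (d : 'I_n) (c : Z * Z) : 'I_n := insubd d (Z.to_nat (13 * c.1 + c.2)).

Lemma cell_vertexK n (d u : 'I_n) : cell_vertex d (cell u) = u.
Proof. by apply: val_inj; rewrite /cell_vertex cell_index Nat2Z.id val_insubd ltn_ord. Qed.

Lemma In_map_mem (T : eqType) U (f : T -> U) x s : x \in s -> List.In (f x) (map f s).
Proof. by elim: s => //= y s IH; rewrite inE => /orP [/eqP -> | /IH]; [left | right]. Qed.

Lemma strip_graph_crossings n (p : 'I_n * 'I_n) : p \in edges (strip_graph n) ->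
  exists L : seq (('I_n * 'I_n) * plane), (size L <= 2)%N /\
    forall q z, crossing (strip_graph n) (@drawing n) p q z -> List.In (q, z) L.
Proof.
move=> Hp; have [AB HU] := strip_graph_edge_step Hp.
set A := cell p.1 in AB HU; set U := subZ2 (cell p.2) A in HU.
have AU : strip_adj A (addZ2 A U) by rewrite addZ2_subZ2.
have [size2 _] := crossing_candidates_bound AU HU.
pose entry CV := ((cell_vertex p.1 CV.1, cell_vertex p.1 (addZ2 CV.1 CV.2)),
                  segment A (addZ2 A U) (meet_param (subZ2 CV.1 A) U CV.2)).
exists (map entry (crossing_candidates A U)); split; first by rewrite size_map.
move=> q z [Hq [qp [s [t [s0 [s1 [t0 [t1 [Ez1 Ez2]]]]]]]]].
have [CD HV] := strip_graph_edge_step Hq.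
set C := cell q.1 in CD HV; set V := subZ2 (cell q.2) C in HV.
have CV : strip_adj C (addZ2 C V) by rewrite addZ2_subZ2.
have CV_AU : (C, V) != (A, U).
  apply: contra_not_neq qp => CV_AU.
  have eC : C = A := congr1 fst CV_AU; have eV : V = U := congr1 snd CV_AU.
  have eD : cell q.2 = cell p.2.
    by rewrite -(addZ2_subZ2 C (cell q.2)) -/V eV eC addZ2_subZ2.
  by apply: injective_projections; apply/val_inj/cell_inj; [exact: eC | exact: eD].
have meet : segment A (addZ2 A U) s = segment C (addZ2 C V) t.
  by rewrite !addZ2_subZ2 -[LHS]/(drawing p s) -[RHS]/(drawing q t) Ez1 Ez2.
have [mem s_eq] := mem_crossing_candidates AU HU CV HV CV_AU (conj s0 s1) (conj t0 t1) meet.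
have -> : (q, z) = entry (C, V).
  rewrite /entry /= addZ2_subZ2 !cell_vertexK -s_eq -Ez1.
  by rewrite addZ2_subZ2 -surjective_pairing.
exact: In_map_mem.
Qed.

Lemma strip_graph_2planar n : k_planar 2 (strip_graph n).
Proof.
exists (fun u => point (cell u)), (@drawing n); split.
  by move=> u v /point_inj/cell_inj/val_inj.
split=> [p Hp | p /strip_graph_crossings //].
have [AB HU] := strip_graph_edge_step Hp; split.
  by apply: segment_arc => E; rewrite E strip_adj_irr in AB.
move=> t w Ht; rewrite /drawing -(addZ2_subZ2 (cell p.1) (cell p.2)).
exact: segment_avoids_points.
Qed.

End StripDrawing.

Lemma edge_count_lower n m : (208 * (n %/ 91 - 1) <= m)%N ->
  Rle (Rminus (Rmult (2 + 2 / 7) (INR n)) 416) (INR m).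
Proof.
move=> Hm; have /leP/le_INR : (16 * n <= 7 * m + 2912)%N by lia.
rewrite -plusE -!multE plus_INR !mult_INR.
have -> : INR 16 = (16 : R) by rewrite INR_IZR_INZ.
have -> : INR 7 = (7 : R) by rewrite INR_IZR_INZ.
have -> : INR 2912 = (2912 : R) by rewrite INR_IZR_INZ.
lra.
Qed.

Theorem theorem17 :
  exists C : R, exists N : nat, forall n : nat, (N <= n)%N ->
    exists e : rel 'I_n,
      simple_graph e /\ k_planar 2 e /\ girth_is e 5 /\
      Rle (Rminus (Rmult (2 + 2 / 7) (INR n)) C) (INR #|edges e|).
Proof.
exists (416 : R), 28 => n Hn; exists (strip_graph n).
split; first exact: strip_graph_simple.
split; first exact: strip_graph_2planar.
split; first exact: strip_graph_girth.
exact: edge_count_lower (strip_graph_edges n).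
Qed.
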